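(* Fix positive constants $\varphi_{\max}, k_s, \rho_{\max}, k_v, \mu_{\max}, q_{\min}, \gamma, \beta$ and a substrate feed $s_{\text{in}}>0$. Fix $\alpha\in(0,1)$ and let $\mathcal{D}_\alpha=(0,\psi_\alpha(s_{\text{in}}))$. Then the function $$d\mapsto P_{\text{yield}}(\alpha,d)=\frac{\alpha\beta\gamma\left(s_{\text{in}}-\psi_\alpha^{-1}(d)\right)}{s_{\text{in}}\,\mu^{-1}(d)}$$ is strictly decreasing on $\mathcal{D}_\alpha$.
   Context: Let $\varphi(s)=\frac{\varphi_{\max}s}{k_s+s}$, $\rho(v)=\frac{\rho_{\max}v}{k_v+v}$ for $s,v\ge 0$, and $\mu(q)=\mu_{\max}\left(1-\frac{q_{\min}}{q}\right)$ for $q\ge q_{\min}$. Their inverses are $\varphi^{-1}(y)=\frac{k_s y}{\varphi_{\max}-y}$ for $0\le y<\varphi_{\max}$, $\rho^{-1}(y)=\frac{k_v y}{\rho_{\max}-y}$ for $0\le y<\rho_{\max}$, and $\mu^{-1}(y)=\frac{q_{\min}\mu_{\max}}{\mu_{\max}-y}$ for $0\le y<\mu_{\max}$. For $\alpha\in(0,1)$, the function $\psi_\alpha^{-1}$ is defined by $$\psi_\alpha^{-1}(y)=\varphi^{-1}\!\left(\frac{y}{1-\alpha}\right)+\frac{\rho^{-1}\!\left(y\,\mu^{-1}(y)\right)}{\alpha\beta\gamma}$$ on the set of $y\ge 0$ where all terms are defined (i.e. $y<(1-\alpha)\varphi_{\max}$, $y<\mu_{\max}$, $y\mu^{-1}(y)<\rho_{\max}$);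 it is strictly increasing from $0$ to $+\infty$, and $\psi_\alpha$ denotes its inverse function, an increasing function on $[0,\infty)$. In the underlying bioreactor model, $P_{\text{yield}}=c^*/s_{\text{in}}$ is the bioreactor yield at the coexistence steady state with algal biomass $c^*=\alpha\beta\gamma(s_{\text{in}}-\psi_\alpha^{-1}(d))/\mu^{-1}(d)$, which exists exactly when $0<d<\psi_\alpha(s_{\text{in}})$. *)

From HB Require Import structures.
From mathcomp Require Import all_boot all_order all_algebra.
From mathcomp Require Import boolp classical_sets reals.
Set Implicit Arguments. Unset Strict Implicit. Unset Printing Implicit Defensive.
Import Order.TTheory GRing.Theory Num.Theory.
Local Open Scope ring_scope.
Local Open Scope classical_set_scope.

Section Bioreactor.
Variable R : realType.
Variables (phimax ks rhomax kv mumax qmin gamma beta : R).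

Definition phi_inv (y : R) : R := ks * y / (phimax - y).
Definition rho_inv (y : R) : R := kv * y / (rhomax - y).
Definition mu_inv (y : R) : R := qmin * mumax / (mumax - y).

Definition psi_inv_dom (alpha y : R) : Prop :=
  [/\ 0 <= y, y < (1 - alpha) * phimax, y < mumax & y * mu_inv y < rhomax].

Definition psi_inv (alpha y : R) : R :=
  phi_inv (y / (1 - alpha)) + rho_inv (y * mu_inv y) / (alpha * beta * gamma).

(* psi_alpha : the inverse function of psi_alpha^{-1}; since psi_alpha^{-1}
   is strictly increasing on its domain, psi_alpha(s) is the supremum of the
   y in the domain with psi_alpha^{-1}(y) <= s. *)
Definition psi (alpha s : R) : R :=
  sup [set y | psi_inv_dom alpha y /\ psi_inv alpha y <= s].

Definition P_yield (sin alpha d : R) : R :=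
  alpha * beta * gamma * (sin - psi_inv alpha d) / (sin * mu_inv d).

End Bioreactor.

From HB Require Import structures.
From mathcomp Require Import all_boot all_order all_algebra.
From mathcomp Require Import boolp classical_sets reals.
From mathcomp Require Import ring lra.
Import Order.TTheory GRing.Theory Num.Theory.
Local Open Scope ring_scope.

(* Up to a positive constant the yield is (s_in - psi_alpha^{-1}(d)) / mu^{-1}(d).
   phi^{-1}, rho^{-1}, mu^{-1} and y |-> y mu^{-1}(y) all have the shape
   c y / (M - y) or c / (M - y), so they increase strictly on [0, M); hence
   psi_alpha^{-1} increases strictly, the numerator decreases and the
   denominator increases.  Positivity of the numerator on the whole interval
   comes from psi_alpha(s_in) being a supremum: below it there is a y with
   psi_alpha^{-1}(y) <= s_in, and every d < y lies in the domain with
   psi_alpha^{-1}(d) < s_in. *)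

Lemma hyperbola_lt (R : realFieldType) (c M a b : R) :
  0 < c -> 0 <= a -> a < b -> b < M -> c * a / (M - a) < c * b / (M - b).
Proof.
move=> c_gt0 a_ge0 ab bM.
have Ma : M - a != 0 by apply/eqP; lra.
have Mb : M - b != 0 by apply/eqP; lra.
have -> : c * b / (M - b) =
          c * a / (M - a) + c * M * (b - a) / ((M - a) * (M - b)).
  by field; apply/andP.
rewrite ltrDl; apply: divr_gt0; last by apply: mulr_gt0; lra.
by apply: mulr_gt0; [apply: mulr_gt0|]; lra.
Qed.

Lemma ltr_div_numden (R : realFieldType) (a1 a2 b1 b2 : R) :
  0 <= a2 -> a2 < a1 -> 0 < b1 -> b1 < b2 -> a2 / b2 < a1 / b1.
Proof.
move=> a2_ge0 a21 b1_gt0 b12.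
apply: (@le_lt_trans _ _ (a2 / b1)).
  by rewrite ler_wpM2l // lef_pV2 ?posrE ?ltW //; lra.
by rewrite ltr_pM2r ?invr_gt0.
Qed.

Section PsiInverse.
Context {R : realType} {phimax ks rhomax kv mumax qmin gamma beta alpha : R}.

Local Notation mu_inv := (mu_inv mumax qmin).
Local Notation dom := (psi_inv_dom phimax rhomax mumax qmin alpha).
Local Notation psiI := (psi_inv phimax ks rhomax kv mumax qmin gamma beta alpha).

Lemma mu_inv_gt0 (y : R) : 0 < qmin -> 0 < mumax -> y < mumax -> 0 < mu_inv y.
Proof. by move=> *; rewrite divr_gt0 ?mulr_gt0 ?subr_gt0. Qed.

Lemma mu_inv_lt (a b : R) :
  0 < qmin -> 0 < mumax -> a < b -> b < mumax -> mu_inv a < mu_inv b.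
Proof. by move=> *; rewrite ltr_pM2l ?mulr_gt0 // ltf_pV2 ?posrE; lra. Qed.

Lemma mulr_mu_inv (y : R) : y * mu_inv y = qmin * mumax * y / (mumax - y).
Proof. by rewrite /mu_inv mulrA [y * _]mulrC. Qed.

Lemma mulr_mu_inv_lt (a b : R) : 0 < qmin -> 0 < mumax ->
  0 <= a -> a < b -> b < mumax -> a * mu_inv a < b * mu_inv b.
Proof. by move=> *; rewrite !mulr_mu_inv hyperbola_lt ?mulr_gt0. Qed.

Hypotheses (ks_gt0 : 0 < ks) (kv_gt0 : 0 < kv) (mumax_gt0 : 0 < mumax)
  (qmin_gt0 : 0 < qmin) (abg_gt0 : 0 < alpha * beta * gamma) (alpha_lt1 : alpha < 1).

Lemma psi_inv_lt {a b : R} : 0 <= a -> a < b -> dom b -> psiI a < psiI b.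
Proof.
move=> a_ge0 ab [_ bphi bmu brho].
have oneBalpha_gt0 : 0 < 1 - alpha by rewrite subr_gt0.
apply: ltrD.
  apply: hyperbola_lt => //; first by rewrite divr_ge0 // ltW.
    by rewrite ltr_pM2r ?invr_gt0.
  by rewrite ltr_pdivrMr // mulrC.
rewrite ltr_pM2r ?invr_gt0 //; apply: hyperbola_lt => //.
  by rewrite mulr_mu_inv divr_ge0 ?mulr_ge0 ?subr_ge0 // ltW // (le_lt_trans (ltW ab)).
exact: mulr_mu_inv_lt.
Qed.

Lemma psi_inv_dom_le {a b : R} : 0 <= a -> a <= b -> dom b -> dom a.
Proof.
move=> a_ge0 ab [_ bphi bmu brho]; split => //.
- exact: le_lt_trans bphi.
- exact: le_lt_trans bmu.
have [->|a_lt_b] := eqVneq a b; first by [].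
apply: le_lt_trans brho; apply/ltW/mulr_mu_inv_lt => //.
by rewrite lt_neqAle a_lt_b.
Qed.

Lemma psi_inv0 : psiI 0 = 0.
Proof. by rewrite /psi_inv /phi_inv /rho_inv !(mul0r, mulr0, add0r). Qed.

Lemma lt_psi_psi_inv {s d : R} : 0 < phimax -> 0 < rhomax ->
  0 <= s -> 0 <= d -> d < psi phimax ks rhomax kv mumax qmin gamma beta alpha s ->
  dom d /\ psiI d < s.
Proof.
move=> phimax_gt0 rhomax_gt0 s_ge0 d_ge0.
set E := [set y : R | dom y /\ psiI y <= s]%classic => d_lt_sup.
have E0 : E 0.
  split; last by rewrite psi_inv0.
  by split; rewrite ?mul0r // mulr_gt0 // subr_gt0.
have supE : has_sup E by split; [exists 0 | exists mumax => y [[]] *; apply: ltW].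
have [y [ydom ys] dy] : exists2 y, E y & d < y.
  have gap_gt0 : 0 < sup E - d by rewrite subr_gt0.
  have [y Ey] := sup_adherent gap_gt0 supE.
  by rewrite opprB addrCA subrr addr0 => dy; exists y.
split; first exact: psi_inv_dom_le (ltW dy) ydom.
exact: lt_le_trans (psi_inv_lt d_ge0 dy ydom) ys.
Qed.

End PsiInverse.

Theorem mainTheorem1 (R : realType)
  (phimax ks rhomax kv mumax qmin gamma beta sin alpha : R) :
  0 < phimax -> 0 < ks -> 0 < rhomax -> 0 < kv -> 0 < mumax -> 0 < qmin ->
  0 < gamma -> 0 < beta -> 0 < sin -> 0 < alpha -> alpha < 1 ->
  forall d1 d2 : R,
    0 < d1 -> d1 < d2 ->
    d2 < psi phimax ks rhomax kv mumax qmin gamma beta alpha sin ->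
    P_yield phimax ks rhomax kv mumax qmin gamma beta sin alpha d2 <
    P_yield phimax ks rhomax kv mumax qmin gamma beta sin alpha d1.
Proof.
move=> phi0 ks0 rho0 kv0 mu0 q0 g0 b0 sin0 a0 a1 d1 d2 d1_gt0 d12 d2_lt_psi.
have abg : 0 < alpha * beta * gamma by rewrite !mulr_gt0.
have d2_gt0 := lt_trans d1_gt0 d12.
have [d2dom psi_d2_lt_sin] :=
  lt_psi_psi_inv ks0 kv0 mu0 q0 abg a1 phi0 rho0 (ltW sin0) (ltW d2_gt0) d2_lt_psi.
have psi_d1_lt_d2 := psi_inv_lt ks0 kv0 mu0 q0 abg a1 (ltW d1_gt0) d12 d2dom.
have [_ _ d2_lt_mumax _] := d2dom.
rewrite /P_yield -!mulrA !ltr_pM2l //.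
apply: ltr_div_numden.
- by rewrite subr_ge0 ltW.
- by rewrite ltrD2l ltrN2.
- by rewrite mulr_gt0 // mu_inv_gt0 // (lt_trans d12).
- by rewrite ltr_pM2l // mu_inv_lt.
Qed.
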